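(* Let $\mathbf{S}$ be a symmetric positive definite $p\times p$ matrix, $\mathbf{S}\ne\mathbf{I}$, with eigenvalues $\omega_1\ge\cdots\ge\omega_p>0$, and let $f(\mathbf{\Theta})=-\ln\det\mathbf{\Theta}+\operatorname{tr}(\mathbf{S}\mathbf{\Theta})$ on symmetric positive definite matrices. For each $i$, let $r_i=\sum_{l=1}^p\omega_l-\sum_{j\ne i}(\ln\omega_{p-j+1}+1)$. Then $r_i>\ln\omega_{p-i+1}+1$, so the equation $-\ln\lambda+\lambda\omega_{p-i+1}=r_i$ has exactly two positive roots $\lambda_{i\min}<\lambda_{i\max}$. If $\mathbf{\Theta}$ is symmetric positive definite with eigenvalues $\lambda_1\ge\cdots\ge\lambda_p$ and $\lambda_i\notin[\lambda_{i\min},\lambda_{i\max}]$ for some $i$, then $f(\mathbf{\Theta})>f(\mathbf{I})=\operatorname{tr}(\mathbf{S})$. Consequently, if $\mathcal{C}$ is any set of symmetric positive definite matrices containing $\mathbf{I}$ and $\mathbf{\Theta}$ minimizes $f$ over $\mathcal{C}$, then $\lambda_i\in[\lambda_{i\min},\lambda_{i\max}]$ for all $i$ and $$\|\nabla f(\mathbf{\Theta})\|_F=\|\mathbf{S}-\mathbf{\Theta}^{-1}\|_F\le\sqrt{\sum_{i=1}^p\lambda_{i\min}^{-2}}+\|\mathbf{S}\|_F.$$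
   Context: $\|\cdot\|_F$ is the Frobenius norm. *)

From HB Require Import structures.
From Stdlib Require Import Reals ClassicalEpsilon FunctionalExtensionality.
From mathcomp Require Import all_boot all_algebra.

Set Implicit Arguments.
Unset Strict Implicit.
Unset Printing Implicit Defensive.

Definition Req_bool (x y : R) : bool := if Req_EM_T x y then true else false.

Lemma Req_boolP : Equality.axiom Req_bool.
Proof. by move=> x y; rewrite /Req_bool; case: Req_EM_T => H; constructor. Qed.

HB.instance Definition _ := hasDecEq.Build R Req_boolP.

Definition R_find (P : pred R) (_ : nat) : option R :=
  match excluded_middle_informative (exists x, P x) with
  | left H => Some (proj1_sig (constructive_indefinite_description _ H))
  | right _ => None
  end.

Lemma R_find_correct P n x : R_find P n = Some x -> P x.
Proof.
rewrite /R_find; case: excluded_middle_informative => // H [<-].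
exact: (proj2_sig (constructive_indefinite_description _ H)).
Qed.

Lemma R_find_complete (P : pred R) : (exists x, P x) -> exists n, R_find P n.
Proof. by move=> H; exists 0%N; rewrite /R_find; case: excluded_middle_informative. Qed.

Lemma R_find_ext (P Q : pred R) : P =1 Q -> R_find P =1 R_find Q.
Proof. by move=> PQ; have -> : P = Q by apply: functional_extensionality. Qed.

HB.instance Definition _ :=
  hasChoice.Build R R_find_correct R_find_complete R_find_ext.

Lemma R_addA : associative Rplus.
Proof. by move=> x y z; rewrite Rplus_assoc. Qed.
Lemma R_mulA : associative Rmult.
Proof. by move=> x y z; rewrite Rmult_assoc. Qed.

HB.instance Definition _ :=
  GRing.isZmodule.Build R R_addA Rplus_comm Rplus_0_l Rplus_opp_l.

Lemma R1_neq0 : R1 != R0.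
Proof. by apply/eqP; exact: R1_neq_R0. Qed.

HB.instance Definition _ :=
  GRing.Zmodule_isComNzRing.Build R R_mulA Rmult_comm Rmult_1_l
    Rmult_plus_distr_r R1_neq0.

Lemma R_mulVf (x : R) : x != 0%R -> Rmult (Rinv x) x = R1.
Proof. by move/eqP=> Hx; exact: Rinv_l. Qed.

HB.instance Definition _ := GRing.ComNzRing_isField.Build R R_mulVf Rinv_0.

Local Open Scope ring_scope.

Definition sym_mx (p : nat) (A : 'M[R]_p) : Prop := A^T = A.

Definition posdef (p : nat) (A : 'M[R]_p) : Prop :=
  forall x : 'cV[R]_p, x <> 0 -> Rlt R0 ((x^T *m A *m x) ord0 ord0).

(* [lam] lists the eigenvalues of A, with algebraic multiplicity, in
   nonincreasing order: lam 0 >= lam 1 >= ... >= lam (p-1)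
   (0-based indices; the paper's lambda_i is lam (i-1)). *)
Definition sorted_eigenvalues (p : nat) (A : 'M[R]_p) (lam : 'I_p -> R) : Prop :=
  char_poly A = \prod_(i < p) ('X - (lam i)%:P) /\
  (forall i j : 'I_p, (i <= j)%N -> Rle (lam j) (lam i)).

Definition fobj (p : nat) (S Theta : 'M[R]_p) : R :=
  Rplus (Ropp (ln (\det Theta))) (\tr (S *m Theta)).

(* r_i = sum_l omega_l - sum_{j <> i} (ln omega_{p-j+1} + 1)   (paper, 1-based);
   0-based: omega_{p-j+1} is omega (rev_ord j). *)
Definition r_const (p : nat) (omega : 'I_p -> R) (i : 'I_p) : R :=
  Rminus (\sum_(l < p) omega l)
         (\sum_(j < p | j != i) Rplus (ln (omega (rev_ord j))) R1).

Definition frob (m n : nat) (A : 'M[R]_(m, n)) : R :=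
  sqrt (\sum_(i < m) \sum_(j < n) Rmult (A i j) (A i j)).

From HB Require Import structures.
From Stdlib Require Import Reals Lra ClassicalEpsilon.
From mathcomp Require Import all_boot all_algebra.

Set Implicit Arguments.
Unset Strict Implicit.
Unset Printing Implicit Defensive.

(* Write S = V diag(omega) V^T and Theta = U diag(lambda) U^T (real spectral
   theorem, by Householder deflation).  The squared entries of V^T U form a
   doubly stochastic matrix, so Abel summation and a bathtub argument give
   tr (S Theta) >= sum_j lambda_j omega_(p-j+1), hence
   f(Theta) >= sum_j g_j(lambda_j) with g_j(l) = - ln l + l omega_(p-j+1).
   Each g_j decreases on (0, 1/omega_(p-j+1)] and increases afterwards, with
   minimum ln omega_(p-j+1) + 1; thus {g_i = r_i} is a pair of points and
   g_i > r_i outside them.  As r_i is tr S = f(I) minus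
   sum_(j <> i) (ln omega_(p-j+1) + 1), the lower bound exceeds f(I) as soon as
   lambda_i leaves [lambda_imin, lambda_imax].  For a minimiser over C, the
   bound lambda_i >= lambda_imin controls ||Theta^-1||_F, and the triangle
   inequality gives the gradient bound. *)

Section ScalarObjective.
Local Open Scope R_scope.

Lemma ln_lt_sub1 t : 0 < t -> t <> 1 -> ln t < t - 1.
Proof.
move=> t0 t1; have := exp_ineq1 (ln t) (ln_neq_0 t t1 t0).
rewrite exp_ln //; lra.
Qed.

Lemma ln_le_sub1 t : 0 < t -> ln t <= t - 1.
Proof.
move=> t0; have [->|t1] := Req_dec t 1; first by rewrite ln_1; lra.
by left; apply: ln_lt_sub1.
Qed.

Lemma ln_sub_bounds x y : 0 < x -> x < y ->
  (y - x) / y < ln y - ln x < (y - x) / x.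
Proof.
move=> x0 xy; have y0 : 0 < y by lra.
have ratio_ln a b : 0 < a -> 0 < b -> ln (a / b) = ln a - ln b.
  move=> a0 b0; rewrite /Rdiv ln_mult ?ln_Rinv //; exact: Rinv_0_lt_compat.
have ratio_ne1 a b : 0 < b -> a <> b -> a / b <> 1.
  by move=> b0 ab E; apply: ab; rewrite -[b]Rmult_1_l -E; field; lra.
split.
- have := ln_lt_sub1 (Rdiv_lt_0_compat _ _ x0 y0) (ratio_ne1 _ _ y0 (Rlt_not_eq _ _ xy)).
  rewrite ratio_ln //.
  have -> : x / y - 1 = - ((y - x) / y) by field; lra.
  lra.
- have := ln_lt_sub1 (Rdiv_lt_0_compat _ _ y0 x0)
    (ratio_ne1 _ _ x0 (not_eq_sym (Rlt_not_eq _ _ xy))).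
  rewrite ratio_ln //.
  have -> : y / x - 1 = (y - x) / x by field; lra.
  lra.
Qed.

Definition scalar_obj (c l : R) : R := - ln l + l * c.

Lemma scalar_obj_inv c : 0 < c -> scalar_obj c (/ c) = ln c + 1.
Proof. by move=> c0; rewrite /scalar_obj ln_Rinv // Rinv_l; lra. Qed.

Lemma scalar_obj_ge c l : 0 < c -> 0 < l -> ln c + 1 <= scalar_obj c l.
Proof.
move=> c0 l0; have := ln_le_sub1 (Rmult_lt_0_compat _ _ l0 c0).
by rewrite ln_mult // /scalar_obj; lra.
Qed.

Lemma scalar_obj_decreasing c x y : 0 < c -> 0 < x -> x < y -> y <= / c ->
  scalar_obj c y < scalar_obj c x.
Proof.
move=> c0 x0 xy yc; have [lnxy _] := ln_sub_bounds x0 xy.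
have : (y - x) * c <= (y - x) / y.
  apply: Rmult_le_compat_l; first lra.
  by rewrite -(Rinv_inv c); apply: Rinv_le_contravar => //; lra.
rewrite /scalar_obj; lra.
Qed.

Lemma scalar_obj_increasing c x y : 0 < c -> / c <= x -> x < y ->
  scalar_obj c x < scalar_obj c y.
Proof.
move=> c0 xc xy; have ic0 := Rinv_0_lt_compat _ c0.
have [_ lnxy] := ln_sub_bounds (Rlt_le_trans _ _ _ ic0 xc) xy.
have : (y - x) / x <= (y - x) * c.
  apply: Rmult_le_compat_l; first lra.
  by rewrite -(Rinv_inv c); apply: Rinv_le_contravar.
rewrite /scalar_obj; lra.
Qed.

Lemma scalar_obj_continuous c l : 0 < l -> continuity_pt (scalar_obj c) l.
Proof.
move=> l0; apply: continuity_pt_plus.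
  apply/continuity_pt_opp/derivable_continuous_pt.
  by exists (/ l); apply: derivable_pt_lim_ln.
apply: continuity_pt_mult; first exact/derivable_continuous_pt/derivable_pt_id.
exact: continuity_pt_const.
Qed.

Lemma scalar_obj_gt_neg_ln c l : 0 < c -> 0 < l -> - ln l < scalar_obj c l.
Proof. by move=> c0 l0; have := Rmult_lt_0_compat _ _ l0 c0; rewrite /scalar_obj; lra. Qed.

(* [ln (l c / 2) <= l c / 2 - 1]: half of the linear term survives the logarithm. *)
Lemma scalar_obj_ge_half c l : 0 < c -> 0 < l ->
  l * c / 2 + 1 - ln (2 / c) <= scalar_obj c l.
Proof.
move=> c0 l0; have lc0 : 0 < l * c / 2 by apply: Rdiv_lt_0_compat; nra.
have := ln_le_sub1 lc0; rewrite /scalar_obj.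
have -> : ln l = ln (l * c / 2) + ln (2 / c).
  rewrite -ln_mult //; last by apply: Rdiv_lt_0_compat; lra.
  by congr ln; field; lra.
lra.
Qed.

Lemma scalar_obj_roots c r : 0 < c -> ln c + 1 < r ->
  exists lmin lmax, [/\ 0 < lmin, lmin < / c, / c < lmax,
    scalar_obj c lmin = r & scalar_obj c lmax = r].
Proof.
move=> c0 r_gt; have ic0 := Rinv_0_lt_compat _ c0.
have g_ic := scalar_obj_inv c0.
have [M [rM cM]] : exists M, r < M /\ ln c < M.
  by exists (Rabs r + Rabs (ln c) + 1); split; [have := Rle_abs r | have := Rle_abs (ln c)];
    have := Rabs_pos r; have := Rabs_pos (ln c); lra.
have [x0 [x0_gt0 [x0_lt g_x0]]] : exists x0, 0 < x0 /\ x0 < / c /\ r < scalar_obj c x0.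
  exists (exp (- M)); split; first exact: exp_pos.
  split; first by rewrite -(exp_ln (/ c)) //; apply: exp_increasing; rewrite ln_Rinv //; lra.
  by have := scalar_obj_gt_neg_ln c0 (exp_pos (- M)); rewrite ln_exp; lra.
have [K [K1 rK]] : exists K, 1 <= K /\ r + ln (2 / c) < K.
  by exists (Rabs r + Rabs (ln (2 / c)) + 1); have := Rle_abs r; have := Rle_abs (ln (2 / c));
    have := Rabs_pos r; have := Rabs_pos (ln (2 / c)); lra.
have [x1 [x1_gt g_x1]] : exists x1, / c < x1 /\ r < scalar_obj c x1.
  exists (2 * K / c); split.
    have : 0 < (2 * K - 1) * / c by apply: Rmult_lt_0_compat; lra.
    by rewrite /Rdiv; lra.
  have := scalar_obj_ge_half c0 (Rdiv_lt_0_compat _ _ (ltac:(lra) : 0 < 2 * K) c0).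
  have -> : 2 * K / c * c / 2 = K by field; lra.
  lra.
have [lmin [[? lmin_le] g_lmin]] : {z | x0 <= z <= / c /\ r - scalar_obj c z = 0}.
  apply: Ranalysis5.IVT_interv => [a a_in|||]; try lra.
  apply: continuity_pt_minus; first by apply: continuity_pt_const.
  by apply: scalar_obj_continuous; lra.
have [lmax [[lmax_ge ?] g_lmax]] : {z | / c <= z <= x1 /\ scalar_obj c z - r = 0}.
  apply: Ranalysis5.IVT_interv => [a a_in|||]; try lra.
  apply: continuity_pt_minus; last by apply: continuity_pt_const.
  by apply: scalar_obj_continuous; lra.
exists lmin, lmax; split; try lra.
- by case: lmin_le => // E; rewrite E in g_lmin; lra.
- by case: lmax_ge => // E; rewrite -E in g_lmax; lra.
Qed.

Definition level_roots c r lmin lmax : Prop := [/\ 0 < lmin, lmin < lmax,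
  forall l, 0 < l -> scalar_obj c l = r <-> l = lmin \/ l = lmax &
  forall l, 0 < l -> l < lmin \/ lmax < l -> r < scalar_obj c l].

Lemma scalar_obj_level_roots c r : 0 < c -> ln c + 1 < r ->
  exists lmin lmax, level_roots c r lmin lmax.
Proof.
move=> c0 r_gt.
have [lmin [lmax [lmin0 lmin_lt lmax_gt g_lmin g_lmax]]] := scalar_obj_roots c0 r_gt.
have below l : 0 < l -> l < lmin -> r < scalar_obj c l.
  by move=> l0 ll; rewrite -g_lmin; apply: scalar_obj_decreasing; lra.
have above l : lmax < l -> r < scalar_obj c l.
  by move=> ll; rewrite -g_lmax; apply: scalar_obj_increasing; lra.
exists lmin, lmax; split=> [//|||l l0 [ll|ll]]; [lra| |exact: below|exact: above].
move=> l l0; split=> [gl|[]->//].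
have [l_le|l_gt] := Rle_or_lt l (/ c).
- left; have [ll|[//|ll]] := Rtotal_order l lmin; first by have := below l l0 ll; lra.
  by have := scalar_obj_decreasing c0 lmin0 ll l_le; lra.
- right; have [ll|[//|ll]] := Rtotal_order l lmax; last by have := above l ll; lra.
  by have := scalar_obj_increasing c0 (Rlt_le _ _ l_gt) ll; lra.
Qed.

End ScalarObjective.

From mathcomp Require Import ring zify.
Import GRing.Theory.
Local Open Scope ring_scope.

(* The ring operations of the MathComp structure on [R] are Stdlib's up to
   conversion; [Rify] makes them syntactically Stdlib's so that [lra]/[nra]
   see them. *)
Lemma addRE (x y : R) : x + y = Rplus x y. Proof. by []. Qed.
Lemma mulRE (x y : R) : x * y = Rmult x y. Proof. by []. Qed.
Lemma oppRE (x : R) : - x = Ropp x. Proof. by []. Qed.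
Lemma invRE (x : R) : x^-1 = Rinv x. Proof. by []. Qed.
Definition R_opsE := (addRE, mulRE, oppRE, invRE).

Ltac Rify := rewrite ?R_opsE;
  try change (@GRing.natmul _ (@GRing.one _) 2) with (Rplus R1 R1);
  try change (@GRing.zero _) with R0; try change (@GRing.one _) with R1.

Lemma sumR_ge0 (I : finType) (P : pred I) (F : I -> R) :
  (forall i, P i -> Rle R0 (F i)) -> Rle R0 (\sum_(i | P i) F i).
Proof.
move=> F0; apply: (big_ind (fun x => Rle R0 x)) => [|x y|//]; first by right.
by rewrite addRE; lra.
Qed.

Lemma ler_sumR (I : finType) (P : pred I) (F G : I -> R) :
  (forall i, P i -> Rle (F i) (G i)) -> Rle (\sum_(i | P i) F i) (\sum_(i | P i) G i).
Proof.
move=> FG; apply: (big_ind2 (fun x y => Rle x y)) => [|x1 x2 y1 y2|//]; first by right.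
by rewrite !addRE; lra.
Qed.

Lemma ler_sumR_sub (I : finType) (P : pred I) (F : I -> R) :
  (forall i, Rle R0 (F i)) -> Rle (\sum_(i | P i) F i) (\sum_i F i).
Proof.
move=> F0; rewrite big_mkcond /=; apply: ler_sumR => i _.
by case: ifP => _; [right | apply: F0].
Qed.

Lemma sqrR_ge0 (x : R) : Rle R0 (x * x).
Proof. nra. Qed.

Lemma sumR_sqr_ge0 (I : finType) (F : I -> R) : Rle R0 (\sum_i F i * F i).
Proof. by apply: sumR_ge0 => i _; apply: sqrR_ge0. Qed.

Lemma sumR_sqr_eq0 (I : finType) (F : I -> R) :
  \sum_i F i * F i = 0 -> forall i, F i = 0.
Proof.
move=> F0 i; rewrite (bigD1 i) //= in F0.
apply: Rsqr_0_uniq; apply: Rplus_eq_0_l F0; first exact: sqrR_ge0.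
exact: sumR_ge0 (fun j _ => sqrR_ge0 (F j)).
Qed.

Definition orthogonal_mx n (U : 'M[R]_n) : Prop := U^T *m U = 1%:M.

Definition orth_diag n (U : 'M[R]_n) (d : 'I_n -> R) : 'M[R]_n :=
  U *m diag_mx (\row_i d i) *m U^T.

Lemma orthogonal_mxC n (U : 'M[R]_n) : orthogonal_mx U -> U *m U^T = 1%:M.
Proof. exact: mulmx1C. Qed.

Lemma householder_involutive n (W : 'M[R]_n) (c : R) : c != 0 ->
  W *m W = (2 * c) *: W -> (1%:M - c^-1 *: W) *m (1%:M - c^-1 *: W) = 1%:M.
Proof.
move=> c0 WW; rewrite mulmxBl !mulmxBr mul1mx mulmx1 -!scalemxAl -!scalemxAr mul1mx.
rewrite WW !scalerA; have -> : c^-1 / c * (2 * c) = 2 * c^-1 by field.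
by apply/matrixP => i j; rewrite !mxE; ring.
Qed.

(* The Householder reflection across [w = u - e_0]; [|w|^2 = 2 (1 - u_0)]. *)
Lemma reflection_to_unit_row n (u : 'rV[R]_n.+1) :
  u *m u^T = 1%:M -> u 0 0 != 1 ->
  exists H : 'M[R]_n.+1, [/\ H^T = H, H *m H = 1%:M & delta_mx 0 0 *m H = u].
Proof.
move=> uu u0; set e := delta_mx 0 0 : 'rV[R]_n.+1.
set w := u - e; set c := 1 - u 0 0.
have c0 : c != 0 by rewrite subr_eq0 eq_sym.
have ee : e *m e^T = 1%:M.
  apply/matrixP => i j; rewrite !ord1 !mxE (bigD1 0) //= big1 ?addr0.
    by rewrite !mxE !eqxx mulr1.
  by move=> k /negPf k0; rewrite !mxE k0 andbF mul0r.
have ue : u *m e^T = (u 0 0)%:M.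
  apply/matrixP => i j; rewrite !ord1 !mxE (bigD1 0) //= big1 ?addr0.
    by rewrite !mxE !eqxx mulr1.
  by move=> k /negPf k0; rewrite !mxE k0 andbF mulr0.
have eu : e *m u^T = (u 0 0)%:M by rewrite -[e *m _]trmxK trmx_mul trmxK ue tr_scalar_mx.
have ew : e *m w^T = (- c)%:M.
  rewrite /w linearB /= mulmxBr eu ee.
  by apply/matrixP => i j; rewrite !ord1 !mxE /c; ring.
have ww : w *m w^T = (2 * c)%:M.
  rewrite /w linearB /= mulmxBl !mulmxBr uu ue eu ee.
  by apply/matrixP => i j; rewrite !ord1 !mxE /c; ring.
exists (1%:M - c^-1 *: (w^T *m w)); split.
- by rewrite linearB /= linearZ /= trmx_mul trmxK trmx1.
- apply: householder_involutive c0 _.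
  by rewrite mulmxA -(mulmxA w^T) ww mul_mx_scalar -scalemxAl.
- rewrite mulmxBr mulmx1 -scalemxAr mulmxA ew mul_scalar_mx scalerA mulrN mulVf //.
  by rewrite scaleN1r opprK /w addrC subrK.
Qed.

Lemma unit_rescale n (v : 'rV[R]_n) : v != 0 ->
  exists k : R, (k *: v) *m (k *: v)^T = 1%:M.
Proof.
move=> v0; pose s := \sum_j v 0 j * v 0 j.
have vv : v *m v^T = s%:M.
  by apply/matrixP => i j; rewrite !ord1 !mxE; apply: eq_bigr => k _; rewrite !mxE.
have s_gt0 : Rlt R0 s.
  have [//|s0] := Rle_lt_or_eq_dec _ _ (sumR_sqr_ge0 (fun j => v 0 j)).
  case/eqP: v0; apply/matrixP => i j; rewrite ord1 mxE.
  exact: sumR_sqr_eq0 (esym s0) j.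
have rs0 : sqrt s != 0 by apply/eqP/Rgt_not_eq/sqrt_lt_R0.
exists (sqrt s)^-1; rewrite linearZ /= -scalemxAl -scalemxAr vv scalerA.
apply/matrixP => i j; rewrite !ord1 !mxE eqxx mulr1n.
have ss : sqrt s * sqrt s = s := sqrt_sqrt s (Rlt_le _ _ s_gt0).
by rewrite -[s in _ * s]ss /=; field.
Qed.

Lemma unit_left_eigenvector n (A : 'M[R]_n.+1) a : eigenvalue A a ->
  exists u : 'rV_n.+1, [/\ u *m A = a *: u, u *m u^T = 1%:M & u 0 0 != 1].
Proof.
case/eigenvalueP => v vA v0; have [k kv] := unit_rescale v0.
have kvA : (k *: v) *m A = a *: (k *: v) by rewrite -scalemxAl vA !scalerA mulrC.
have [kv00|kv00] := eqVneq ((k *: v) 0 0) 1; last by exists (k *: v).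
exists (- (k *: v)); split.
- by rewrite mulNmx kvA scalerN.
- by rewrite linearN /= mulNmx mulmxN opprK.
- by rewrite mxE kv00; apply/eqP => E; have : Ropp R1 = R1 := E; lra.
Qed.

Lemma char_poly_involution_conj n (A H : 'M[R]_n) : H *m H = 1%:M ->
  char_poly (H *m A *m H) = char_poly A.
Proof.
move=> HH; pose H' := map_mx polyC H.
have HH' : H' *m H' = 1%:M by rewrite -map_mxM HH map_mx1.
have conj_mx : char_poly_mx (H *m A *m H) = H' *m char_poly_mx A *m H'.
  rewrite /char_poly_mx !map_mxM -/H' mulmxBr mulmxBl scalar_mxC -mulmxA.
  by congr (_ - _); rewrite -mulmxA HH' mulmx1.
by rewrite /char_poly conj_mx !det_mulmx mulrC mulrA -det_mulmx HH' det1 mul1r.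
Qed.

Lemma symmetric_deflation n (A : 'M[R]_(1 + n)) a : A^T = A -> eigenvalue A a ->
  exists (H : 'M[R]_(1 + n)) (D : 'M[R]_n),
    [/\ H^T = H, H *m H = 1%:M, D^T = D & H *m A *m H = block_mx a%:M 0 0 D].
Proof.
move=> AT /unit_left_eigenvector [u [uA uu u0]].
have [H [HT HH eH]] := reflection_to_unit_row uu u0.
pose B : 'M_(1 + n) := H *m A *m H.
have BE : H *m A *m H = B by [].
have BT : B^T = B by rewrite /B !trmx_mul HT AT mulmxA.
have B_row0 j : B 0 j = a * (delta_mx 0 0 : 'rV[R]_(1 + n)) 0 j.
  have : row 0 B = a *: delta_mx 0 0.
    by rewrite /B rowE !mulmxA eH uA -scalemxAl -eH -mulmxA HH mulmx1.
  by move/matrixP/(_ 0 j); rewrite !mxE.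
clearbody B.
have B_col0 i : B i 0 = a * (delta_mx 0 0 : 'rV[R]_(1 + n)) 0 i.
  by rewrite -B_row0 -{1}BT mxE.
exists H, (drsubmx B); split=> //.
  by apply/matrixP => i j; rewrite !mxE -{1}BT mxE.
rewrite BE -{1}[B]submxK; congr block_mx; apply/matrixP => i j; rewrite !ord1 !mxE.
- by rewrite (_ : lshift n 0 = 0) ?B_row0 ?mxE ?eqxx ?mulr1 //; apply: val_inj.
- by rewrite (_ : lshift n 0 = 0) ?B_row0 ?mxE ?mulr0 //; apply: val_inj.
- by rewrite (_ : lshift n 0 = 0) ?B_col0 ?mxE ?mulr0 //; apply: val_inj.
Qed.

Lemma diag_mx_lift0 n (d : 'I_(1 + n) -> R) :
  diag_mx (\row_i d i) = block_mx (d 0)%:M 0 0 (diag_mx (\row_i d (lift 0 i))).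
Proof.
have -> : \row_i d i = row_mx (\row_(j < 1) d 0) (\row_(j < n) d (lift 0 j)).
  apply/matrixP => i j; rewrite !mxE; case: splitP => k jk; rewrite !mxE; congr d.
    by apply: val_inj; rewrite /= jk ord1.
  by apply: val_inj; rewrite /= jk.
rewrite diag_mx_row; congr block_mx.
by apply/matrixP => i j; rewrite !ord1 !mxE eqxx mulr1n.
Qed.

Lemma symmetric_spectral n (A : 'M[R]_n) (lam : 'I_n -> R) : A^T = A ->
  char_poly A = \prod_(i < n) ('X - (lam i)%:P) ->
  exists U : 'M[R]_n, orthogonal_mx U /\ A = orth_diag U lam.
Proof.
elim: n A lam => [|n IH] A lam AT cA.
  by exists 1%:M; split; [rewrite /orthogonal_mx trmx1 mulmx1 | apply/matrixP => -[]].
have : eigenvalue A (lam 0).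
  by rewrite eigenvalue_root_char cA big_ord_recl rootM root_XsubC eqxx.
case/(symmetric_deflation AT) => H [D [HT HH DT HAH]].
have cD : char_poly D = \prod_(i < n) ('X - (lam (lift 0 i))%:P).
  apply: (@mulfI _ ('X - (lam 0)%:P)); first by rewrite polyXsubC_eq0.
  rewrite -(big_ord_recl n (fun i => 'X - (lam i)%:P)) -cA.
  have cB : char_poly (block_mx (lam 0)%:M 0 0 D : 'M_(1 + n)) =
            ('X - (lam 0)%:P) * char_poly D.
    by rewrite /char_poly char_block_diag_mx det_ublock det_mx11 !mxE eqxx mulr1n.
  by rewrite -(char_poly_involution_conj A HH) HAH cB.
have [U [UU DE]] := IH D _ DT cD.
exists (H *m block_mx 1%:M 0 0 U).
have AE : A = H *m block_mx (lam 0)%:M 0 0 D *m H.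
  by rewrite -HAH !mulmxA HH mul1mx -mulmxA HH mulmx1.
rewrite /orthogonal_mx /orth_diag trmx_mul (tr_block_mx (1%:M : 'M_1)) !trmx0 trmx1 HT.
split.
  rewrite -mulmxA (mulmxA H) HH mul1mx (@mulmx_block _ 1 n 1 n 1 n).
  by rewrite !mulmx0 !mul0mx !addr0 !add0r mulmx1 UU -scalar_mx_block.
rewrite [LHS]AE DE diag_mx_lift0 !mulmxA; congr (_ *m _); rewrite -!mulmxA; congr (_ *m _).
rewrite !(@mulmx_block _ 1 n 1 n 1 n) !mulmx0 !mul0mx !addr0 !add0r !mulmx1 !mul1mx.
by rewrite !mulmx0 /orth_diag !mulmxA.
Qed.

Definition nonincreasing_seq n (a : 'I_n -> R) : Prop :=
  forall i j : 'I_n, (i <= j)%N -> Rle (a j) (a i).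

(* [b] extended by [0] past its end, so that [succ_diff b] telescopes to [b]. *)
Definition ext0 n (b : 'I_n -> R) (k : nat) : R :=
  if insub k is Some i then b i else 0.

Lemma ext0E n (b : 'I_n -> R) (i : 'I_n) : ext0 b i = b i.
Proof. by rewrite /ext0 valK. Qed.

Definition succ_diff n (b : 'I_n -> R) (k : nat) : R := ext0 b k - ext0 b k.+1.

Lemma sum_succ_diff n (b : 'I_n -> R) (j : 'I_n) :
  \sum_(t < n | (j <= t)%N) succ_diff b t = b j.
Proof.
have -> : \sum_(t < n | (j <= t)%N) succ_diff b t = \sum_(j <= t < n) succ_diff b t.
  by rewrite big_geq_mkord.
have -> : \sum_(j <= t < n) succ_diff b t = - \sum_(j <= t < n) (ext0 b t.+1 - ext0 b t).
  by rewrite -sumrN; apply: eq_bigr => t _; rewrite opprB.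
rewrite telescope_sumr ?(ltnW (ltn_ord j)) // ext0E /ext0 insubF ?ltnn //.
by rewrite sub0r opprK.
Qed.

Lemma succ_diff_ge0 n (b : 'I_n -> R) (t : 'I_n) : nonincreasing_seq b ->
  (forall i, Rle R0 (b i)) -> Rle R0 (succ_diff b t).
Proof.
move=> b_dec b_ge0; rewrite /succ_diff ext0E /ext0.
case: insubP => [i _ it|_]; last by have := b_ge0 t; lra.
have : (t <= i)%N by move: it => /= ->.
by move/b_dec; lra.
Qed.

Lemma abel_summation n (b c : 'I_n -> R) :
  \sum_j b j * c j = \sum_(t < n) succ_diff b t * \sum_(j < n | (j <= t)%N) c j.
Proof.
under [RHS]eq_bigr => t _ do rewrite mulr_sumr big_mkcond /=.
rewrite exchange_big /=; apply: eq_bigr => j _.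
by rewrite -(sum_succ_diff b j) mulr_suml big_mkcond.
Qed.

(* With [L] the indices of the [t + 1] smallest entries of [a] and [a0] the
   largest of them, [(a k - a0) (w k - [k \in L]) >= 0] for every [k]. *)
Lemma bathtub n (a w : 'I_n -> R) (t : 'I_n) : nonincreasing_seq a ->
  (forall k, Rle R0 (w k) /\ Rle (w k) R1) ->
  \sum_k w k = \sum_(j < n | (j <= t)%N) 1 ->
  Rle (\sum_(j < n | (j <= t)%N) a (rev_ord j)) (\sum_k a k * w k).
Proof.
move=> a_dec w01 w_sum; pose L := fun k : 'I_n => (rev_ord k <= t)%N.
have sum_L (F : 'I_n -> R) :
    \sum_(j < n | (j <= t)%N) F (rev_ord j) = \sum_k (if L k then F k else 0).
  rewrite -big_mkcond (reindex_inj rev_ord_inj) /=.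
  by apply: eq_big => k; rewrite /L ?rev_ordK.
pose a0 := a (rev_ord t).
have key k : Rle (a0 * (w k - (if L k then 1 else 0)))%R
                 (a k * w k - (if L k then a k else 0))%R.
  have [w0 w1] := w01 k; rewrite /L /a0 /=; case: ifP => k_t.
    have /a_dec : (rev_ord t <= k)%N by move: k_t => /=; lia.
    Rify; nra.
  have /a_dec : (k <= rev_ord t)%N by move: k_t => /=; lia.
  Rify; nra.
have : Rle (\sum_k a0 * (w k - (if L k then 1 else 0)))%R
           (\sum_k (a k * w k - (if L k then a k else 0)))%R.
  by apply: ler_sumR => k _; apply: key.
rewrite -mulr_sumr sumrB -(sum_L (fun=> 1)) -w_sum subrr mulr0 sumrB -sum_L.
set X := \sum_k _; set Y := \sum_(j < n | _) _.
by Rify; lra.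
Qed.

(* Abel summation in [b] reduces the claim to the bathtub inequality for the
   column-prefix sums of [m]. *)
Lemma doubly_stochastic_rearrangement n (a b : 'I_n -> R) (m : 'I_n -> 'I_n -> R) :
  nonincreasing_seq a -> nonincreasing_seq b -> (forall i, Rle R0 (b i)) ->
  (forall k j, Rle R0 (m k j)) ->
  (forall k, \sum_j m k j = 1) -> (forall j, \sum_k m k j = 1) ->
  Rle (\sum_j b j * a (rev_ord j)) (\sum_k \sum_j a k * b j * m k j).
Proof.
move=> a_dec b_dec b_ge0 m_ge0 m_row m_col.
have -> : \sum_k \sum_j a k * b j * m k j = \sum_j b j * \sum_k a k * m k j.
  rewrite exchange_big /=; apply: eq_bigr => j _; rewrite mulr_sumr.
  by apply: eq_bigr => k _; rewrite mulrCA mulrA.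
rewrite (abel_summation b) (abel_summation b); apply: ler_sumR => t _.
pose w k := \sum_(j < n | (j <= t)%N) m k j.
have -> : \sum_(j < n | (j <= t)%N) \sum_k a k * m k j = \sum_k a k * w k.
  by rewrite exchange_big /=; apply: eq_bigr => k _; rewrite mulr_sumr.
have w01 k : Rle R0 (w k) /\ Rle (w k) R1.
  split; first exact: sumR_ge0 (fun j _ => m_ge0 k j).
  by rewrite -[R1](m_row k); apply: ler_sumR_sub.
have w_sum : \sum_k w k = \sum_(j < n | (j <= t)%N) 1.
  by rewrite exchange_big /=; apply: eq_bigr => j _; apply: m_col.
rewrite !mulRE; apply: Rmult_le_compat_l; first exact: succ_diff_ge0.
exact: bathtub a_dec w01 w_sum.
Qed.

Lemma sumsq_mx_trace m n (A : 'M[R]_(m, n)) :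
  \sum_i \sum_j A i j * A i j = \tr (A *m A^T).
Proof.
by apply: eq_bigr => i _; rewrite mxE; apply: eq_bigr => j _; rewrite mxE.
Qed.

Section OrthDiag.
Variables (n : nat) (U : 'M[R]_n).
Hypothesis UU : orthogonal_mx U.

Lemma mulmx_orthogonal_tr m (X : 'M[R]_(m, n)) : X *m U^T *m U = X.
Proof. by rewrite -mulmxA UU mulmx1. Qed.

Lemma posdef_orth_diag_gt0 (d : 'I_n -> R) :
  posdef (orth_diag U d) -> forall i, Rlt R0 (d i).
Proof.
move=> d_pd i; set x := U *m (delta_mx i 0 : 'cV[R]_n).
have x0 : x <> 0.
  move/(congr1 (mulmx U^T)); rewrite mulmxA UU mul1mx mulmx0.
  by move/matrixP/(_ i 0); rewrite !mxE !eqxx /= => /eqP; rewrite oner_eq0.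
have := d_pd x x0; rewrite /x /orth_diag trmx_mul trmx_delta !mulmxA.
by rewrite !mulmx_orthogonal_tr -rowE -colE !mxE eqxx mulr1n.
Qed.

Lemma det_orth_diag (d : 'I_n -> R) : \det (orth_diag U d) = \prod_i d i.
Proof.
rewrite !det_mulmx det_diag mulrC mulrA -det_mulmx UU det1 mul1r.
by apply: eq_bigr => i _; rewrite mxE.
Qed.

Lemma trace_orth_diag (d : 'I_n -> R) : \tr (orth_diag U d) = \sum_i d i.
Proof.
rewrite mxtrace_mulC mulmxA UU mul1mx mxtrace_diag.
by apply: eq_bigr => i _; rewrite mxE.
Qed.

Lemma invmx_orth_diag (d : 'I_n -> R) : (forall i, d i != 0) ->
  invmx (orth_diag U d) = orth_diag U (fun i => (d i)^-1).
Proof.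
move=> d0; have dd : orth_diag U d *m orth_diag U (fun i => (d i)^-1) = 1%:M.
  rewrite /orth_diag !mulmxA mulmx_orthogonal_tr -(mulmxA U) mul_mx_diag.
  have -> : \matrix_(i, j) (diag_mx (\row_i d i) i j * (\row_i (d i)^-1) 0 j) = 1%:M.
    apply/matrixP => i j; rewrite !mxE.
    by case: eqVneq => [->|]; rewrite ?mulr1n ?mulr0n ?mul0r ?mulfV.
  by rewrite mulmx1 orthogonal_mxC.
by rewrite -[invmx _]mulmx1 -dd mulKmx //; case: (mulmx1_unit dd).
Qed.

Lemma frob_orth_diag (d : 'I_n -> R) :
  frob (orth_diag U d) = sqrt (\sum_i d i * d i).
Proof.
rewrite /frob sumsq_mx_trace /orth_diag !trmx_mul trmxK tr_diag_mx !mulmxA.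
rewrite mulmx_orthogonal_tr mxtrace_mulC !mulmxA UU mul1mx mul_mx_diag.
by congr sqrt; apply: eq_bigr => i _; rewrite !mxE eqxx mulr1n.
Qed.

End OrthDiag.

Lemma orthogonal_row_sumsq n (W : 'M[R]_n) : W *m W^T = 1%:M ->
  forall k, \sum_j W k j * W k j = 1.
Proof.
move=> WW k; have := congr1 (fun M : 'M[R]_n => M k k) WW.
by rewrite !mxE eqxx mulr1n => <-; apply: eq_bigr => j _; rewrite mxE.
Qed.

Lemma trace_orth_diag_mul n (V U : 'M[R]_n) (om lam : 'I_n -> R) :
  \tr (orth_diag V om *m orth_diag U lam) =
  \sum_k \sum_j om k * lam j * ((V^T *m U) k j * (V^T *m U) k j).
Proof.
rewrite /orth_diag !mulmxA mxtrace_mulC !mulmxA.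
have -> : U^T *m V *m diag_mx (\row_i om i) *m V^T *m U *m diag_mx (\row_i lam i)
   = ((V^T *m U)^T *m diag_mx (\row_i om i)) *m ((V^T *m U) *m diag_mx (\row_i lam i)).
  by rewrite trmx_mul trmxK !mulmxA.
move: (V^T *m U) => W; rewrite /mxtrace exchange_big; apply: eq_bigr => j _.
by rewrite mxE; apply: eq_bigr => k _; rewrite !mul_mx_diag !mxE; ring.
Qed.

(* The squared entries of the orthogonal matrix [V^T U] form a doubly
   stochastic matrix. *)
Lemma trace_orth_diag_mul_ge n (V U : 'M[R]_n) (om lam : 'I_n -> R) :
  orthogonal_mx V -> orthogonal_mx U ->
  nonincreasing_seq om -> nonincreasing_seq lam -> (forall i, Rle R0 (lam i)) ->
  Rle (\sum_j lam j * om (rev_ord j)) (\tr (orth_diag V om *m orth_diag U lam)).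
Proof.
move=> VV UU om_dec lam_dec lam_ge0; rewrite trace_orth_diag_mul.
apply: doubly_stochastic_rearrangement => // [k j|k|j]; first exact: sqrR_ge0.
  apply: orthogonal_row_sumsq.
  by rewrite trmx_mul trmxK mulmxA -(mulmxA V^T) orthogonal_mxC // mulmx1.
rewrite -(orthogonal_row_sumsq (W := (V^T *m U)^T) _ j).
  by apply: eq_bigr => k _; rewrite !mxE.
by rewrite trmxK trmx_mul trmxK !mulmxA -(mulmxA U^T) orthogonal_mxC // mulmx1.
Qed.

Lemma ln_prod_pos n (f : 'I_n -> R) : (forall i, Rlt R0 (f i)) ->
  ln (\prod_i f i) = \sum_i ln (f i).
Proof.
move=> f_gt0; suff [] : Rlt R0 (\prod_i f i) /\ ln (\prod_i f i) = \sum_i ln (f i) by [].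
apply: (big_ind2 (fun p s => Rlt R0 p /\ ln p = s)) => [|p1 s1 p2 s2 [? <-] [? <-]|i _].
- by split; [exact: Rlt_0_1 | exact: ln_1].
- by split; [exact: Rmult_lt_0_compat | exact: ln_mult].
- by split.
Qed.

Lemma fobj_ge_sum_scalar_obj n (V U : 'M[R]_n) (om lam : 'I_n -> R) :
  orthogonal_mx V -> orthogonal_mx U ->
  nonincreasing_seq om -> nonincreasing_seq lam -> (forall i, Rlt R0 (lam i)) ->
  Rle (\sum_j scalar_obj (om (rev_ord j)) (lam j))
      (fobj (orth_diag V om) (orth_diag U lam)).
Proof.
move=> VV UU om_dec lam_dec lam_gt0.
have := trace_orth_diag_mul_ge VV UU om_dec lam_dec (fun i => Rlt_le _ _ (lam_gt0 i)).
rewrite /fobj det_orth_diag // ln_prod_pos // /scalar_obj big_split sumrN /=.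
by set Y := \sum_j _ * _; set X := \tr _; set Z := \sum_j ln _; Rify; lra.
Qed.

Lemma sum_sqr_lincomb (I : finType) (x y : I -> R) (p q : R) :
  \sum_i (p * x i + q * y i) * (p * x i + q * y i) =
  p * p * (\sum_i x i * x i) + 2 * p * q * (\sum_i x i * y i) +
  q * q * (\sum_i y i * y i).
Proof. by rewrite !mulr_sumr -!big_split /=; apply: eq_bigr => i _; ring. Qed.

(* Expand [0 <= sum_i (|y| x_i + |x| y_i)^2]. *)
Lemma cauchy_schwarz_lower (I : finType) (x y : I -> R) :
  Rle (- (sqrt (\sum_i x i * x i) * sqrt (\sum_i y i * y i))) (\sum_i x i * y i).
Proof.
case: (Rle_lt_or_eq_dec _ _ (sqrt_pos (\sum_i x i * x i))) => [x_gt0|/esym x0]; last first.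
  rewrite x0 Rmult_0_l Ropp_0 big1 => [|i _]; first by right.
  by rewrite (sumR_sqr_eq0 (sqrt_eq_0 _ (sumR_sqr_ge0 x) x0)) mul0r.
case: (Rle_lt_or_eq_dec _ _ (sqrt_pos (\sum_i y i * y i))) => [y_gt0|/esym y0]; last first.
  rewrite y0 Rmult_0_r Ropp_0 big1 => [|i _]; first by right.
  by rewrite (sumR_sqr_eq0 (sqrt_eq_0 _ (sumR_sqr_ge0 y) y0)) mulr0.
have := sumR_sqr_ge0 (fun i => sqrt (\sum_i y i * y i) * x i + sqrt (\sum_i x i * x i) * y i).
rewrite sum_sqr_lincomb.
have := sqrt_sqrt _ (sumR_sqr_ge0 x); have := sqrt_sqrt _ (sumR_sqr_ge0 y).
have := Rmult_lt_0_compat _ _ x_gt0 y_gt0.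
set A := \sum_i x i * x i; set B := \sum_i x i * y i; set C := \sum_i y i * y i.
set a := sqrt A; set c := sqrt C => ac_gt0 cc aa.
Rify; nra.
Qed.

Lemma minkowski_sub (I : finType) (x y : I -> R) :
  Rle (sqrt (\sum_i (x i - y i) * (x i - y i)))
      (sqrt (\sum_i x i * x i) + sqrt (\sum_i y i * y i)).
Proof.
have -> : \sum_i (x i - y i) * (x i - y i) =
          \sum_i (1 * x i + -1 * y i) * (1 * x i + -1 * y i).
  by apply: eq_bigr => i _; rewrite mul1r mulN1r.
rewrite sum_sqr_lincomb -(sqrt_square (sqrt _ + sqrt _)); last first.
  by have := sqrt_pos (\sum_i x i * x i); have := sqrt_pos (\sum_i y i * y i); lra.
apply: sqrt_le_1_alt; have := cauchy_schwarz_lower x y.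
have := sqrt_sqrt _ (sumR_sqr_ge0 x); have := sqrt_sqrt _ (sumR_sqr_ge0 y).
set A := \sum_i x i * x i; set B := \sum_i x i * y i; set C := \sum_i y i * y i.
move=> cc aa; Rify; nra.
Qed.

Lemma frob_sub_le n (A B : 'M[R]_n) : Rle (frob (A - B)) (frob A + frob B).
Proof.
rewrite /frob !pair_big /=.
under eq_bigr => ij _ do rewrite !mxE.
exact: minkowski_sub.
Qed.

Lemma fobj_one n (S : 'M[R]_n) : fobj S 1%:M = \tr S.
Proof. by rewrite /fobj det1 ln_1 mulmx1 Ropp_0 Rplus_0_l. Qed.

Definition ln_excess n (omega : 'I_n -> R) : R := \sum_l (omega l - (ln (omega l) + 1)).

Lemma r_constE n (omega : 'I_n -> R) i :
  r_const omega i = Rplus (Rplus (ln (omega (rev_ord i))) R1) (ln_excess omega).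
Proof.
have sum_rev : \sum_j (ln (omega (rev_ord j)) + 1) = \sum_j (ln (omega j) + 1).
  by rewrite (reindex_inj rev_ord_inj); apply: eq_bigr => j _; rewrite rev_ordK.
rewrite /r_const /ln_excess sumrB -sum_rev.
rewrite [\sum_j (ln (omega (rev_ord j)) + 1)](bigD1 i) //=.
set s := \sum_(j < n | j != i) _; set t := \sum_(l < n) omega l.
by Rify; lra.
Qed.

Lemma ln_excess_gt0 n (omega : 'I_n -> R) : (forall l, Rlt R0 (omega l)) ->
  (exists l, omega l <> 1) -> Rlt R0 (ln_excess omega).
Proof.
move=> om_gt0 [l om_l]; rewrite /ln_excess (bigD1 l) //=.
have term_ge0 j : Rle R0 (omega j - (ln (omega j) + 1))%R.
  by have := ln_le_sub1 (om_gt0 j); Rify; lra.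
have := sumR_ge0 (P := [pred j | j != l]) (fun j _ => term_ge0 j).
have := ln_lt_sub1 (om_gt0 l) om_l.
by set s := \sum_(j < n | j != l) _; Rify; lra.
Qed.

Lemma orth_diag1 n (U : 'M[R]_n) (d : 'I_n -> R) : orthogonal_mx U ->
  (forall i, d i = 1) -> orth_diag U d = 1%:M.
Proof.
move=> UU d1; rewrite /orth_diag (_ : diag_mx _ = 1%:M) ?mulmx1 ?orthogonal_mxC //.
by apply/matrixP => i j; rewrite !mxE d1.
Qed.

Lemma level_roots_choice (I : Type) (c r : I -> R) :
  (forall i, Rlt R0 (c i)) -> (forall i, Rlt (Rplus (ln (c i)) R1) (r i)) ->
  exists lmin lmax : I -> R, forall i, level_roots (c i) (r i) (lmin i) (lmax i).
Proof.
move=> c_gt0 r_gt.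
have /choice [lm lmP] : forall i, exists lm : R * R, level_roots (c i) (r i) lm.1 lm.2.
  by move=> i; have [lmin [lmax ?]] := scalar_obj_level_roots (c_gt0 i) (r_gt i); exists (lmin, lmax).
by exists (fun i => (lm i).1), (fun i => (lm i).2).
Qed.

Section ObjectiveBounds.
Variables (p : nat) (V : 'M[R]_p) (omega : 'I_p -> R).
Hypotheses (VV : orthogonal_mx V) (om_dec : nonincreasing_seq omega)
  (om_gt0 : forall l, Rlt R0 (omega l)).

Lemma fobj_gt_tr (U : 'M[R]_p) (lam : 'I_p -> R) (i : 'I_p) :
  orthogonal_mx U -> nonincreasing_seq lam -> (forall j, Rlt R0 (lam j)) ->
  Rlt (r_const omega i) (scalar_obj (omega (rev_ord i)) (lam i)) ->
  Rlt (\tr (orth_diag V omega)) (fobj (orth_diag V omega) (orth_diag U lam)).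
Proof.
move=> UU lam_dec lam_gt0 r_lt; rewrite trace_orth_diag //.
have := fobj_ge_sum_scalar_obj VV UU om_dec lam_dec lam_gt0; rewrite (bigD1 i) //=.
have : Rle (\sum_(j < p | j != i) (ln (omega (rev_ord j)) + 1))
           (\sum_(j < p | j != i) scalar_obj (omega (rev_ord j)) (lam j)).
  apply: ler_sumR => j _.
  by have := scalar_obj_ge (om_gt0 (rev_ord j)) (lam_gt0 j); Rify; lra.
move: r_lt; rewrite /r_const.
set a := \sum_(j < p | j != i) (ln _ + _); set b := \sum_(j < p | j != i) scalar_obj _ _.
by set t := \sum_(l < p) omega l; Rify; lra.
Qed.

Lemma r_const_gt : orth_diag V omega <> 1%:M ->
  forall i, Rlt (Rplus (ln (omega (rev_ord i))) R1) (r_const omega i).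
Proof.
move=> S_neq1 i; rewrite r_constE; suff : Rlt R0 (ln_excess omega) by lra.
apply: ln_excess_gt0 => //; apply: NNPP => om1; apply/S_neq1/(orth_diag1 (d := omega) VV).
by move=> l; apply: NNPP => om_l; apply: om1; exists l.
Qed.

Lemma fobj_gt_outside (lmin lmax : 'I_p -> R) (Theta : 'M[R]_p) (lam : 'I_p -> R) :
  (forall i, level_roots (omega (rev_ord i)) (r_const omega i) (lmin i) (lmax i)) ->
  sym_mx Theta -> posdef Theta -> sorted_eigenvalues Theta lam ->
  (exists i, Rlt (lam i) (lmin i) \/ Rlt (lmax i) (lam i)) ->
  Rlt (\tr (orth_diag V omega)) (fobj (orth_diag V omega) Theta).
Proof.
move=> roots Th_sym Th_pd [cTh lam_dec] [i lam_out].
have [U [UU ThE]] := symmetric_spectral Th_sym cTh; subst Theta.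
have lam_gt0 := posdef_orth_diag_gt0 UU Th_pd.
have [_ _ _ above] := roots i.
exact: fobj_gt_tr UU lam_dec lam_gt0 (above _ (lam_gt0 i) lam_out).
Qed.

End ObjectiveBounds.

Lemma frob_sub_invmx_le n (S U : 'M[R]_n) (lam lmin : 'I_n -> R) :
  orthogonal_mx U -> (forall i, Rlt R0 (lmin i) /\ Rle (lmin i) (lam i)) ->
  Rle (frob (S - invmx (orth_diag U lam)))
      (Rplus (sqrt (\sum_(i < n) Rinv (Rmult (lmin i) (lmin i)))) (frob S)).
Proof.
move=> UU lam_ge; have lam_gt0 i : Rlt R0 (lam i) by have [] := lam_ge i; lra.
rewrite (invmx_orth_diag UU); last by move=> i; apply/eqP/Rgt_not_eq/lam_gt0.
apply: Rle_trans (frob_sub_le _ _) _; rewrite (frob_orth_diag UU) Rplus_comm.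
apply/Rplus_le_compat_r/sqrt_le_1_alt/ler_sumR => i _.
have [lmin_gt0 lmin_le] := lam_ge i; Rify; rewrite -Rinv_mult.
by apply: Rinv_le_contravar; [exact: Rmult_lt_0_compat | nra].
Qed.

Theorem mainTheorem17 (p : nat) (S : 'M[R]_p) (omega : 'I_p -> R) :
  sym_mx S -> posdef S -> S <> 1%:M%R -> sorted_eigenvalues S omega ->
  (forall i : 'I_p,
     Rlt (Rplus (ln (omega (rev_ord i))) R1) (r_const omega i)) /\
  exists lmin lmax : 'I_p -> R,
    (forall i : 'I_p,
       Rlt R0 (lmin i) /\ Rlt (lmin i) (lmax i) /\
       (forall l : R, Rlt R0 l ->
          (Rplus (Ropp (ln l)) (Rmult l (omega (rev_ord i))) = r_const omega i
           <-> l = lmin i \/ l = lmax i))) /\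
    (forall (Theta : 'M[R]_p) (lam : 'I_p -> R),
       sym_mx Theta -> posdef Theta -> sorted_eigenvalues Theta lam ->
       (exists i : 'I_p, Rlt (lam i) (lmin i) \/ Rlt (lmax i) (lam i)) ->
       Rgt (fobj S Theta) (fobj S 1%:M%R)) /\
    fobj S 1%:M%R = (\tr S)%R /\
    (forall (C : 'M[R]_p -> Prop) (Theta : 'M[R]_p) (lam : 'I_p -> R),
       (forall A, C A -> sym_mx A /\ posdef A) ->
       C 1%:M%R -> C Theta ->
       (forall A, C A -> Rle (fobj S Theta) (fobj S A)) ->
       sorted_eigenvalues Theta lam ->
       (forall i : 'I_p, Rle (lmin i) (lam i) /\ Rle (lam i) (lmax i)) /\
       Rle (frob (S - invmx Theta)%R)
           (Rplus (sqrt (\sum_(i < p) Rinv (Rmult (lmin i) (lmin i)))%R) (frob S))).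
Proof.
move=> S_sym S_pd S_neq1 [cS om_dec].
have [V [VV SE]] := symmetric_spectral S_sym cS; subst S.
have om_gt0 := posdef_orth_diag_gt0 VV S_pd.
have r_gt := r_const_gt VV om_gt0 S_neq1.
have [lmin [lmax roots]] := level_roots_choice (fun i => om_gt0 (rev_ord i)) r_gt.
have outside_gt Theta lam : sym_mx Theta -> posdef Theta -> sorted_eigenvalues Theta lam ->
    (exists i, Rlt (lam i) (lmin i) \/ Rlt (lmax i) (lam i)) ->
    Rgt (fobj (orth_diag V omega) Theta) (fobj (orth_diag V omega) 1%:M).
  by rewrite fobj_one; apply: fobj_gt_outside.
split=> //; exists lmin, lmax; split; first by move=> i; have [] := roots i.
split=> //; split; first exact: fobj_one.
move=> C Th lam C_pd C1 C_Th Th_min sTh; have [Th_sym Th_pd] := C_pd _ C_Th.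
have lam_in i : Rle (lmin i) (lam i) /\ Rle (lam i) (lmax i).
  have := Th_min _ C1; split; apply: Rnot_lt_le => lam_out;
    have := outside_gt _ _ Th_sym Th_pd sTh (ex_intro _ i _); lra.
split=> //; case: sTh => cTh _; have [U [UU ->]] := symmetric_spectral Th_sym cTh.
apply: frob_sub_invmx_le UU _ => i; have [lmin_gt0 _ _ _] := roots i.
by split; [exact: lmin_gt0 | exact: (lam_in i).1].
Qed.
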